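(* Let $(G,d(\cdot))$ be piecewise $\mathcal C^1$ with continuous reflection and suppose Assumption 2' holds with unit vectors $v_x$ and constants $r_x>0$, $0<c^1_x<1<c^2_x<\infty$, $\alpha_x>0$, $x\in\mathcal V$. Then for each $x\in\mathcal V$ there is a constant $A_x<\infty$ such that for every $r\in(0,r_x/c^2_x)$ there exists a nonnegative function $g_{x,r}\in\mathcal C^2_c(\overline G)$ such that: (1) $\mathrm{supp}[g_{x,r}]\cap\overline G\subset B_{c^2_xr}(x)\cap\overline G\subset B_{r_x}(x)\cap\overline G$; (2) $g_{x,r}(y)=1$ for each $y\in B_{c^1_xr}(x)\cap\overline G$; (3) $\sup_{y\in\overline G}|g_{x,r}(y)|\le A_x$, $\sup_{y\in\overline G}|\nabla g_{x,r}(y)|\le A_x/r$, $\sup_{y\in\overline G}\sum_{i,j=1}^J\big|\frac{\partial^2g_{x,r}(y)}{\partial y_i\partial y_j}\big|<A_x/r^2$; (4) $\langle d,\nabla g_{x,r}(y)\rangle\le0$ for all $d\in d(y)$ and $y\in\partial G$.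
   Context: Notation: $B_r(x)=\{y:|y-x|\le r\}$; $\mathrm{dist}(y,A)=\inf_{z\in A}|y-z|$; $\sigma:\mathbb R^J\to\mathbb R^{J\times N}$ continuous and $a=\sigma\sigma^T$. $\mathcal C^2_c(\overline G)$: restrictions to $\overline G$ of functions $\mathcal C^2$ on every open neighbourhood of $\overline G$ with compact support. Piecewise $\mathcal C^1$ with continuous reflection: $G=\bigcap_{i\in\mathcal I}G_i$ nonempty domain, $\mathcal I$ finite, $G_i=\{\phi^i>0\}$, $\partial G_i=\{\phi^i=0\}$ with $\phi^i\in\mathcal C^1(\mathbb R^J)$; $n^i(x)$ the unit inward normal to $\partial G_i$; $\mathcal I(x)=\{i:x\in\partial G_i\}$; $n(x)=\{\sum_{i\in\mathcal I(x)}s_in^i(x):s_i\ge0\}$; $\gamma^i$ continuous vector fields on $\partial G_i$ with $\langle n^i,\gamma^i\rangle>0$; $d(x)=\{\sum_{i\in\mathcal I(x)}s_i\gamma^i(x):s_i\ge0\}$ for $x\in\partial G$. $\mathcal U=\{x\in\partial G:\exists n\in n(x),\ \langle n,d\rangle>0\ \forall d\in d(x)\setminus\{0\}\}$. Assumption 2': $\mathcal V\subset\partial G$ is finite with $\mathcal V\supset\partial G\setminus\mathcal U$, and for each $x\in\mathcal V$ there exist a unit vector $v_x$ and constants $r_x>0$, $\alpha_x>0$, $0<c^1_x<1<c^2_x<\infty$ such that, with $\Theta_x=\{z:\langle z,v_x\rangle\ge0\}$, for all $y\in\overline G\cap B_{r_x}(x)$: (1) $\langle v_x,y-x\rangle\ge\alpha_x|y-x|$;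 (2) $\gamma^i(y)\in\Theta_x$ for each $i\in\mathcal I(y)\subset\mathcal I(x)$; (3) for every $r\in(0,r_x/c^2_x)$, $\overline G\cap B_{c^1_xr}(x)\subseteq\{y\in\overline G\cap B_{r_x}(x):\mathrm{dist}(y,x+rv_x+\Theta_x)>0\}\subseteq\overline G\cap B_{c^2_xr}(x)$; (4) $v_x^Ta(y)v_x\ge\alpha_x$ for all $y\in B_{r_x}(x)$. *)

From HB Require Import structures.
From mathcomp Require Import all_boot all_order all_algebra.
From mathcomp Require Import all_classical all_reals all_analysis.
Set Implicit Arguments. Unset Strict Implicit. Unset Printing Implicit Defensive.
Import Order.TTheory GRing.Theory Num.Theory.
Import numFieldNormedType.Exports.
Local Open Scope classical_set_scope.
Local Open Scope ring_scope.

Section Defs.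
Variables (R : realType) (J : nat).
Notation vec := 'rV[R]_J.

Definition dotp (u v : vec) : R := \sum_(k < J) u 0 k * v 0 k.
Definition enorm (u : vec) : R := Num.sqrt (dotp u u).

Definition cball (x : vec) (r : R) : set vec := [set y | enorm (y - x) <= r].

Definition distS (y : vec) (A : set vec) : R := inf [set enorm (y - z) | z in A].

Definition bdry (A : set vec) : set vec := closure A `\` interior A.

Definition ebase (k : 'I_J) : vec := delta_mx 0 k.

Definition partial (f : vec -> R) (k : 'I_J) (y : vec) : R := 'D_(ebase k) f y.

Definition grad (f : vec -> R) (y : vec) : vec := \row_k partial f k y.

Definition C1 (f : vec -> R) : Prop :=
  forall k : 'I_J, (forall y, derivable f y (ebase k)) /\ continuous (partial f k).

Definition C2 (f : vec -> R) : Prop := C1 f /\ forall k : 'I_J, C1 (partial f k).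

Definition supp (f : vec -> R) : set vec := closure [set y | f y != 0].

Variable I : finType.

Definition Gi (phi : I -> vec -> R) (i : I) : set vec := [set y | 0 < phi i y].
Definition Gset (phi : I -> vec -> R) : set vec := [set y | forall i, 0 < phi i y].
Definition bGi (phi : I -> vec -> R) (i : I) : set vec := [set y | phi i y = 0].

Definition nrm (phi : I -> vec -> R) (i : I) (y : vec) : vec :=
  (enorm (grad (phi i) y))^-1 *: grad (phi i) y.

Definition Iset (phi : I -> vec -> R) (x : vec) : set I := [set i | bGi phi i x].

Definition cone (phi : I -> vec -> R) (w : I -> vec -> vec) (x : vec) : set vec :=
  [set u | exists s : I -> R, (forall i, 0 <= s i) /\
     u = \sum_(i | `[< Iset phi x i >]) s i *: w i x].

Definition ncone (phi : I -> vec -> R) (x : vec) : set vec := cone phi (nrm phi) x.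
Definition dcone (phi : I -> vec -> R) (gamma : I -> vec -> vec) (x : vec) : set vec :=
  cone phi gamma x.

Definition pw_C1_cont_refl (phi : I -> vec -> R) (gamma : I -> vec -> vec) : Prop :=
  [/\ Gset phi !=set0 /\ connected (Gset phi),
      forall i, C1 (phi i),
      (forall i, bdry (Gi phi i) = bGi phi i) /\
      (forall i y, bGi phi i y -> grad (phi i) y != 0),
      forall i, {within bGi phi i, continuous (gamma i)} &
      forall i y, bGi phi i y -> 0 < dotp (nrm phi i y) (gamma i y)].

Definition Uset (phi : I -> vec -> R) (gamma : I -> vec -> vec) : set vec :=
  [set x | bdry (Gset phi) x /\
     exists2 n, ncone phi x n &
       forall d, dcone phi gamma x d -> d != 0 -> 0 < dotp n d].

Definition Theta (v : vec) : set vec := [set z | 0 <= dotp z v].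

Definition assumption2' (N : nat) (sigma : vec -> 'M[R]_(J, N))
  (phi : I -> vec -> R) (gamma : I -> vec -> vec) (V : set vec)
  (v : vec -> vec) (rr alpha c1 c2 : vec -> R) : Prop :=
  [/\ finite_set V, V `<=` bdry (Gset phi),
      bdry (Gset phi) `\` Uset phi gamma `<=` V &
      forall x, V x ->
      [/\ enorm (v x) = 1 /\ 0 < rr x /\ 0 < alpha x /\ 0 < c1 x /\ c1 x < 1 /\ 1 < c2 x,
        (forall y, closure (Gset phi) y -> cball x (rr x) y ->
           [/\ alpha x * enorm (y - x) <= dotp (v x) (y - x),
               Iset phi y `<=` Iset phi x &
               forall i, Iset phi y i -> Theta (v x) (gamma i y)]),
        (forall r, 0 < r -> r < rr x / c2 x ->
           closure (Gset phi) `&` cball x (c1 x * r)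
           `<=` [set y | closure (Gset phi) y /\ cball x (rr x) y /\
                 0 < distS y [set x + r *: v x + z | z in Theta (v x)]] /\
           [set y | closure (Gset phi) y /\ cball x (rr x) y /\
                 0 < distS y [set x + r *: v x + z | z in Theta (v x)]]
           `<=` closure (Gset phi) `&` cball x (c2 x * r)) &
        forall y, cball x (rr x) y ->
           alpha x <= (v x *m (sigma y *m (sigma y)^T) *m (v x)^T) 0 0]].

End Defs.

(* The cutoff is g(y) = H(<v, y - x> / r) * K(|y - x|^2), a product of two C^2
   one-dimensional steps obtained by rescaling the distribution function of the
   cubic B-spline: H falls from 1 to 0 as its argument goes from c1 to 1, K as
   |y - x|^2 goes from (c2 r)^2 to rx^2.  By Assumption 2'(3), a point y of the
   closure of G with c2 r < |y - x| <= rx is at distance 0 from x + r' v + Theta_x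
   for all r' slightly above r, hence <v, y - x> > r and H vanishes near y together
   with its derivatives; beyond rx the factor K does.  Inside B_(c2 r)(x) we have
   K = 1, so grad g = H'(.) v / r with H' <= 0, which pairs nonpositively with every
   reflection direction since these lie in Theta_x by Assumption 2'(2); and the
   bounds on g, grad g, D^2 g are those of H, H', H'' times 1, 1/r, 1/r^2. *)
From HB Require Import structures.
From mathcomp Require Import all_boot all_order all_algebra.
From mathcomp Require Import all_classical all_reals all_analysis.
From mathcomp Require Import ring lra.
Import Order.TTheory GRing.Theory Num.Theory.
Import numFieldNormedType.Exports.
Local Open Scope classical_set_scope.
Local Open Scope ring_scope.
Set Implicit Arguments. Unset Strict Implicit. Unset Printing Implicit Defensive.

Section Derivative1.
Variable R : realType.
Implicit Types (f g : R -> R) (a t D df dg : R).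

Lemma is_derive1_quadratic_bound f a D M : 0 <= M ->
  (forall x, `|x - a| <= 1 -> `|f x - f a - D * (x - a)| <= M * (x - a) ^+ 2) ->
  is_derive a (1:R) f D.
Proof.
move=> M0 Hb.
have dq_cvg : (fun h : R => h^-1 *: ((f \o shift a) (h *: 1) - f a)) @ 0^' --> D.
  apply/cvgrPdist_le => e e0.
  near=> h.
  have h0 : h != 0 by near: h; exact: nbhs_dnbhs_neq.
  have hs1 : `|h| <= 1 by near: h; apply: dnbhs0_le.
  have hs2 : `|h| <= e / (M + 1).
    by near: h; apply: dnbhs0_le; rewrite divr_gt0 // ltr_pwDr.
  have := Hb (h + a); rewrite addrK => /(_ hs1) H.
  rewrite /= scaler1.
  have -> : D - h^-1 * (f (h + a) - f a) = - (h^-1 * (f (h + a) - f a - D * h)).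
    by field.
  rewrite normrN normrM normrV ?unitfE // ler_pdivrMl ?normr_gt0 //.
  apply: (le_trans H).
  rewrite -(real_normK (num_real h)) expr2 mulrA [_ * e]mulrC ler_pM2r ?normr_gt0 //.
  rewrite ler_pdivlMr ?ltr_pwDr // in hs2.
  apply: le_trans hs2.
  by rewrite mulrC ler_pM2l ?normr_gt0 // lerDl.
apply: DeriveDef; first by apply/cvg_ex; exists D.
exact: cvg_lim.
Unshelve. all: by end_near.
Qed.

Lemma is_derive1_eq f t D D' : is_derive t (1:R) f D' -> D' = D -> is_derive t (1:R) f D.
Proof. by move=> + <-. Qed.

Lemma is_derive1_cst (c : R) t : is_derive t (1:R) (fun=> c) 0.
Proof. exact: is_derive_cst. Qed.

Lemma is_derive1_id t : is_derive t (1:R) (fun s => s) 1.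
Proof. exact: is_derive_id. Qed.

Lemma is_derive1D f g t df dg : is_derive t (1:R) f df -> is_derive t (1:R) g dg ->
  is_derive t (1:R) (fun s => f s + g s) (df + dg).
Proof. by move=> hf hg; exact: (is_deriveD hf hg). Qed.

Lemma is_derive1B f g t df dg : is_derive t (1:R) f df -> is_derive t (1:R) g dg ->
  is_derive t (1:R) (fun s => f s - g s) (df - dg).
Proof. by move=> hf hg; exact: (is_deriveB hf hg). Qed.

Lemma is_derive1M f g t df dg : is_derive t (1:R) f df -> is_derive t (1:R) g dg ->
  is_derive t (1:R) (fun s => f s * g s) (f t * dg + g t * df).
Proof. by move=> hf hg; exact: (is_deriveM hf hg). Qed.

Lemma is_derive1_comp_fun f g t df dg : is_derive t (1:R) f df -> is_derive (f t) (1:R) g dg ->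
  is_derive t (1:R) (fun s => g (f s)) (dg * df).
Proof. by move=> hf hg; exact: (is_derive1_comp hg hf). Qed.

Lemma is_derive1_affine a b t : is_derive t (1:R) (fun s => a * (s - b)) a.
Proof.
apply: (is_derive1_eq (is_derive1M (is_derive1_cst a t)
  (is_derive1B (is_derive1_id t) (is_derive1_cst b t)))).
by rewrite subr0 mulr1 mulr0 addr0.
Qed.

Lemma continuous_of_is_derive1 f (f' : R -> R) :
  (forall t, is_derive t (1:R) f (f' t)) -> continuous f.
Proof.
move=> df t; apply: differentiable_continuous; apply/derivable1_diffP.
exact: ex_derive.
Qed.

Lemma is_derive1_line a b t : is_derive t (1:R) (fun s => a + s * b) b.
Proof.
apply: (is_derive1_eq (is_derive1D (is_derive1_cst a t)
  (is_derive1M (is_derive1_id t) (is_derive1_cst b t)))).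
by rewrite mulr0 mulr1 !add0r.
Qed.

Lemma is_derive1_parabola a b : is_derive 0 (1:R) (fun s => a + s * b + s * s) b.
Proof.
apply: (is_derive1_eq (is_derive1D (is_derive1_line a b 0)
  (is_derive1M (is_derive1_id 0) (is_derive1_id 0)))).
by rewrite mul0r add0r addr0.
Qed.

End Derivative1.

Section ContinuousFun.
Variables (R : realType) (T : topologicalType).
Implicit Types f g : T -> R.

Lemma continuousD_fun f g : continuous f -> continuous g -> continuous (fun y => f y + g y).
Proof. by move=> cf cg y; exact: (continuousD (cf y) (cg y)). Qed.

Lemma continuousB_fun f g : continuous f -> continuous g -> continuous (fun y => f y - g y).
Proof. by move=> cf cg y; exact: (continuousB (cf y) (cg y)). Qed.

Lemma continuousM_fun f g : continuous f -> continuous g -> continuous (fun y => f y * g y).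
Proof. by move=> cf cg y; exact: (continuousM (cf y) (cg y)). Qed.

Lemma continuous_comp_fun (G : R -> R) f : continuous f -> continuous G ->
  continuous (fun y => G (f y)).
Proof. by move=> cf cG y; exact: (continuous_comp (cf y) (cG _)). Qed.

Lemma continuous_sum_fun n (F : 'I_n -> T -> R) :
  (forall i, continuous (F i)) -> continuous (fun y => \sum_(i < n) F i y).
Proof. by move=> cF; apply: continuous_big => //; exact: add_continuous. Qed.

End ContinuousFun.

Section SmoothStep.
Variable R : realType.
Implicit Types (u : R) (F : R -> R).

Definition pos_part u : R := Order.max u 0.

Lemma pos_partE u : (u <= 0 /\ pos_part u = 0) \/ (0 <= u /\ pos_part u = u).
Proof.
rewrite /pos_part maxEle; have [u0|u0] := leP u 0.
  by left.
by right; rewrite ltW.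
Qed.

Lemma continuous_pos_part : continuous pos_part.
Proof.
have := @max_fun_continuous _ R R id (cst 0) (fun=> cvg_id) (fun=> cvg_cst _).
exact.
Qed.

Definition trunc_cube u := pos_part u ^+ 3.
Definition trunc_cube1 u := 3 * pos_part u ^+ 2.
Definition trunc_cube2 u := 6 * pos_part u.

Lemma is_derive_trunc_cube u : is_derive u (1:R) trunc_cube (trunc_cube1 u).
Proof.
apply: (is_derive1_quadratic_bound (M := 3 * `|u| + 1)); first by rewrite addr_ge0 ?mulr_ge0.
move=> y; rewrite /trunc_cube /trunc_cube1 !ler_norml => /andP[h1 h2].
have := sqr_ge0 (y - u); have := sqr_ge0 y; have := sqr_ge0 u.
have [u0|u0] := leP 0 u; [rewrite (ger0_norm u0) | rewrite (ltr0_norm u0)];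
case: (pos_partE y) => -[? ->]; case: (pos_partE u) => -[? ->];
move=> *; apply/andP; split; nra.
Qed.

Lemma is_derive_trunc_cube1 u : is_derive u (1:R) trunc_cube1 (trunc_cube2 u).
Proof.
apply: (is_derive1_quadratic_bound (M := 3)) => // y _.
rewrite /trunc_cube1 /trunc_cube2 ler_norml.
have := sqr_ge0 (y - u); have := sqr_ge0 y; have := sqr_ge0 u.
case: (pos_partE y) => -[? ->]; case: (pos_partE u) => -[? ->];
move=> *; apply/andP; split; nra.
Qed.

(* [bdiff3 trunc_cube] is the distribution function of the cardinal cubic
   B-spline: a C^2 step from 0 on (-oo, 0] to 1 on [3, +oo). *)
Definition bdiff3 F u := (F u - 3 * F (u - 1) + 3 * F (u - 2) - F (u - 3)) / 6.

Lemma is_derive_bdiff3 F F' : (forall u, is_derive u (1:R) F (F' u)) ->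
  forall u, is_derive u (1:R) (bdiff3 F) (bdiff3 F' u).
Proof.
move=> dF u.
have dsh c : is_derive u (1:R) (fun s => F (s - c)) (F' (u - c)).
  apply: (is_derive1_eq (is_derive1_comp_fun
    (is_derive1B (is_derive1_id u) (is_derive1_cst c u)) (dF _))).
  by rewrite subr0 mulr1.
apply: (is_derive1_eq (is_derive1M (is_derive1B (is_derive1D (is_derive1B (dF u)
  (is_derive1M (is_derive1_cst 3 u) (dsh 1))) (is_derive1M (is_derive1_cst 3 u) (dsh 2)))
  (dsh 3)) (is_derive1_cst 6^-1 u))).
rewrite /bdiff3; ring.
Qed.

Lemma continuous_bdiff3 F : continuous F -> continuous (bdiff3 F).
Proof.
move=> cF.
have cid : continuous (fun s : R => s) by move=> ?; exact: cvg_id.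
have csh c : continuous (fun s => F (s - c)).
  exact: (continuous_comp_fun (continuousB_fun cid (@cst_continuous _ _ c)) cF).
have c3 c : continuous (fun s => 3 * F (s - c)).
  exact: (continuousM_fun (@cst_continuous _ _ (3 : R)) (csh c)).
exact: (continuousM_fun (continuousB_fun (continuousD_fun (continuousB_fun cF (c3 1))
  (c3 2)) (csh 3)) (@cst_continuous _ _ (6^-1 : R))).
Qed.

Definition smooth_step := bdiff3 trunc_cube.
Definition smooth_step1 := bdiff3 trunc_cube1.
Definition smooth_step2 := bdiff3 trunc_cube2.

Lemma is_derive_smooth_step u : is_derive u (1:R) smooth_step (smooth_step1 u).
Proof. exact: (is_derive_bdiff3 is_derive_trunc_cube). Qed.

Lemma is_derive_smooth_step1 u : is_derive u (1:R) smooth_step1 (smooth_step2 u).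
Proof. exact: (is_derive_bdiff3 is_derive_trunc_cube1). Qed.

Lemma continuous_smooth_step2 : continuous smooth_step2.
Proof.
apply: continuous_bdiff3.
exact: (continuousM_fun (@cst_continuous _ _ (6 : R)) continuous_pos_part).
Qed.

Ltac pos_part_cases u :=
  case: (pos_partE u) => -[? ->]; case: (pos_partE (u - 1)) => -[? ->];
  case: (pos_partE (u - 2)) => -[? ->]; case: (pos_partE (u - 3)) => -[? ->].

Lemma smooth_step_le0 u : u <= 0 ->
  [/\ smooth_step u = 0, smooth_step1 u = 0 & smooth_step2 u = 0].
Proof.
rewrite /smooth_step /smooth_step1 /smooth_step2 /bdiff3.
rewrite /trunc_cube /trunc_cube1 /trunc_cube2 => u0.
pos_part_cases u; split; (try lra); nra.
Qed.

Lemma smooth_step_ge3 u : 3 <= u ->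
  [/\ smooth_step u = 1, smooth_step1 u = 0 & smooth_step2 u = 0].
Proof.
rewrite /smooth_step /smooth_step1 /smooth_step2 /bdiff3.
rewrite /trunc_cube /trunc_cube1 /trunc_cube2 => u3.
pos_part_cases u; split; (try lra); nra.
Qed.

Lemma smooth_step2_bound u : `|smooth_step2 u| <= 1.
Proof.
rewrite /smooth_step2 /bdiff3 /trunc_cube2 ler_norml.
pos_part_cases u; apply/andP; split; lra.
Qed.

Lemma smooth_step1_bound u : 0 <= smooth_step1 u <= 1.
Proof.
rewrite /smooth_step1 /bdiff3 /trunc_cube1.
pos_part_cases u; apply/andP; split; nra.
Qed.

Lemma smooth_step_bound u : 0 <= smooth_step u <= 1.
Proof.
have [u0|u0] := leP u 0; first by case: (smooth_step_le0 u0) => ->; rewrite lexx ler01.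
have [u3|u3] := leP 3 u; first by case: (smooth_step_ge3 u3) => ->; rewrite lexx ler01.
(* the bounds [2 w^2 - w <= w^3 <= w^2] on [0, 1] are what [nra] needs *)
have cube_bounds (w : R) : 0 <= w -> w <= 1 ->
    [/\ 0 <= w * w, w * w <= w, 0 <= w * (w * w), w * (w * w) <= w * w
      & 2 * (w * w) - w <= w * (w * w)].
  move=> w0 w1; have ww : w * w <= w by rewrite ler_piMr.
  have ww0 : 0 <= w * w by rewrite mulr_ge0.
  split => //; first by rewrite mulr_ge0.
    by rewrite ler_piMl.
  rewrite -subr_ge0.
  have -> : w * (w * w) - (2 * (w * w) - w) = w * (w - 1) ^+ 2 by ring.
  by rewrite mulr_ge0 ?sqr_ge0.
rewrite /smooth_step /bdiff3 /trunc_cube !exprS expr0 !mulr1.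
have [u1|u1] := leP u 1.
  have [] := cube_bounds u (ltW u0) u1 => *.
  pos_part_cases u; apply/andP; split; nra.
have [u2|u2] := leP u 2.
  have [] := cube_bounds (u - 1) ltac:(lra) ltac:(lra) => *.
  pos_part_cases u; apply/andP; split; nra.
have [] := cube_bounds (u - 2) ltac:(lra) ltac:(lra) => *.
pos_part_cases u; apply/andP; split; nra.
Qed.

End SmoothStep.

Section Cutoff.
Variables (R : realType) (lo hi : R).
Hypothesis lo_lt_hi : lo < hi.
Implicit Types t : R.

Definition cutoff_slope : R := 3 / (hi - lo).

Definition cutoff t := 1 - smooth_step (cutoff_slope * (t - lo)).
Definition cutoff1 t := - cutoff_slope * smooth_step1 (cutoff_slope * (t - lo)).
Definition cutoff2 t := - cutoff_slope ^+ 2 * smooth_step2 (cutoff_slope * (t - lo)).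

Lemma cutoff_slope_gt0 : 0 < cutoff_slope.
Proof. by rewrite divr_gt0 // subr_gt0. Qed.

Lemma is_derive_cutoff t : is_derive t (1:R) cutoff (cutoff1 t).
Proof.
apply: (is_derive1_eq (is_derive1B (is_derive1_cst 1 t)
  (is_derive1_comp_fun (is_derive1_affine _ _ t) (is_derive_smooth_step _)))).
by rewrite /cutoff1; ring.
Qed.

Lemma is_derive_cutoff1 t : is_derive t (1:R) cutoff1 (cutoff2 t).
Proof.
apply: (is_derive1_eq (is_derive1M (is_derive1_cst _ t)
  (is_derive1_comp_fun (is_derive1_affine _ _ t) (is_derive_smooth_step1 _)))).
by rewrite /cutoff2; ring.
Qed.

Lemma continuous_cutoff2 : continuous cutoff2.
Proof.
have cid : continuous (fun s : R => s) by move=> ?; exact: cvg_id.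
have caff : continuous (fun s => cutoff_slope * (s - lo)).
  exact: (continuousM_fun (@cst_continuous _ _ cutoff_slope)
    (continuousB_fun cid (@cst_continuous _ _ lo))).
rewrite /cutoff2.
exact: (continuousM_fun (@cst_continuous _ _ (- cutoff_slope ^+ 2))
  (continuous_comp_fun caff (@continuous_smooth_step2 R))).
Qed.

Lemma cutoff_le_lo t : t <= lo -> [/\ cutoff t = 1, cutoff1 t = 0 & cutoff2 t = 0].
Proof.
move=> tlo; have a0 := cutoff_slope_gt0; rewrite /cutoff /cutoff1 /cutoff2.
have [-> -> ->] : [/\ smooth_step (cutoff_slope * (t - lo)) = 0,
    smooth_step1 (cutoff_slope * (t - lo)) = 0 & smooth_step2 (cutoff_slope * (t - lo)) = 0].
  by apply: smooth_step_le0; rewrite pmulr_rle0 // subr_le0.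
by split; rewrite ?subr0 ?mulr0.
Qed.

Lemma cutoff_ge_hi t : hi <= t -> [/\ cutoff t = 0, cutoff1 t = 0 & cutoff2 t = 0].
Proof.
move=> hit; have a0 := cutoff_slope_gt0; rewrite /cutoff /cutoff1 /cutoff2.
have [-> -> ->] : [/\ smooth_step (cutoff_slope * (t - lo)) = 1,
    smooth_step1 (cutoff_slope * (t - lo)) = 0 & smooth_step2 (cutoff_slope * (t - lo)) = 0].
  apply: smooth_step_ge3.
  have <- : cutoff_slope * (hi - lo) = 3 by rewrite /cutoff_slope divfK // subr_eq0 gt_eqF.
  by rewrite ler_pM2l // lerB.
by split; rewrite ?subrr ?mulr0.
Qed.

Lemma cutoff_bound t : 0 <= cutoff t <= 1.
Proof.
by have /andP[h0 h1] := smooth_step_bound (cutoff_slope * (t - lo));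
  rewrite /cutoff subr_ge0 h1 lerBlDr lerDl h0.
Qed.

Lemma cutoff1_bound t : - cutoff_slope <= cutoff1 t <= 0.
Proof.
have a0 := cutoff_slope_gt0.
have /andP[h0 h1] := smooth_step1_bound (cutoff_slope * (t - lo)).
rewrite /cutoff1; apply/andP; split; nra.
Qed.

Lemma cutoff2_bound t : `|cutoff2 t| <= cutoff_slope ^+ 2.
Proof.
rewrite /cutoff2 normrM normrN normrX (gtr0_norm cutoff_slope_gt0).
by rewrite ler_piMr ?exprn_ge0 ?(ltW cutoff_slope_gt0) ?smooth_step2_bound.
Qed.

End Cutoff.

Section Euclid.
Variables (R : realType) (J : nat).
Local Notation vec := 'rV[R]_J.
Implicit Types (u v c : vec) (s : R).

Lemma dotpC u v : dotp u v = dotp v u.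
Proof. by apply: eq_bigr => i _; rewrite mulrC. Qed.

Lemma dotpDl u v c : dotp (u + v) c = dotp u c + dotp v c.
Proof. by rewrite /dotp -big_split; apply: eq_bigr => i _; rewrite mxE mulrDl. Qed.

Lemma dotpDr u v c : dotp c (u + v) = dotp c u + dotp c v.
Proof. by rewrite dotpC dotpDl !(dotpC c). Qed.

Lemma dotpZl s u c : dotp (s *: u) c = s * dotp u c.
Proof. by rewrite /dotp mulr_sumr; apply: eq_bigr => i _; rewrite mxE mulrA. Qed.

Lemma dotpZr s u c : dotp c (s *: u) = s * dotp c u.
Proof. by rewrite dotpC dotpZl dotpC. Qed.

Lemma dotpBl u v c : dotp (u - v) c = dotp u c - dotp v c.
Proof. by rewrite dotpDl -scaleN1r dotpZl mulN1r. Qed.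

Lemma dotpBr u v c : dotp c (u - v) = dotp c u - dotp c v.
Proof. by rewrite dotpC dotpBl !(dotpC c). Qed.

Lemma dotp0r u : dotp u 0 = 0.
Proof. by rewrite /dotp big1 // => i _; rewrite mxE mulr0. Qed.

Lemma dotp0l u : dotp 0 u = 0.
Proof. by rewrite dotpC dotp0r. Qed.

Lemma dotp_suml (I : finType) (P : pred I) (F : I -> vec) c :
  dotp (\sum_(i | P i) F i) c = \sum_(i | P i) dotp (F i) c.
Proof.
apply: (big_morph (fun u => dotp u c)); first by move=> u v; rewrite dotpDl.
exact: dotp0l.
Qed.

Lemma dotp_ebase u k : dotp u (ebase R k) = u 0 k.
Proof.
rewrite /dotp (bigD1 k) //= big1 => [|i ik]; first by rewrite !mxE !eqxx /= mulr1 addr0.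
by rewrite !mxE eqxx (negbTE ik) mulr0.
Qed.

Lemma dotp_ge0 u : 0 <= dotp u u.
Proof. by rewrite sumr_ge0 // => i _; rewrite -expr2 sqr_ge0. Qed.

Lemma enorm_ge0 u : 0 <= enorm u.
Proof. exact: sqrtr_ge0. Qed.

Lemma enorm_sqr u : enorm u ^+ 2 = dotp u u.
Proof. by rewrite /enorm sqr_sqrtr // dotp_ge0. Qed.

Lemma enorm0 : enorm (0 : vec) = 0.
Proof. by rewrite /enorm dotp0r sqrtr0. Qed.

Lemma enormZ s u : enorm (s *: u) = `|s| * enorm u.
Proof. by rewrite /enorm dotpZl dotpZr mulrA -expr2 sqrtrM ?sqr_ge0 // sqrtr_sqr. Qed.

Lemma normr_dotp_unit_le n u : enorm n = 1 -> `|dotp n u| <= enorm u.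
Proof.
move=> n1; have nn : dotp n n = 1 by rewrite -enorm_sqr n1 expr1n.
set t := dotp n u.
have : 0 <= dotp (u - t *: n) (u - t *: n) by apply: dotp_ge0.
rewrite !dotpBl !dotpBr !dotpZl !dotpZr nn (dotpC u n) -/t => proj_ge0.
have t_le : t ^+ 2 <= enorm u ^+ 2 by rewrite enorm_sqr; nra.
by rewrite -ler_sqr ?nnegrE ?normr_ge0 ?enorm_ge0 // real_normK ?num_real.
Qed.

Lemma normr_coord_le u k : `|u 0 k| <= enorm u.
Proof.
have : u 0 k ^+ 2 <= dotp u u.
  by rewrite /dotp (bigD1 k) //= -expr2 lerDl sumr_ge0 // => i _; rewrite -expr2 sqr_ge0.
rewrite -enorm_sqr => coord_le.
by rewrite -ler_sqr ?nnegrE ?normr_ge0 ?enorm_ge0 // real_normK ?num_real.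
Qed.

Lemma continuous_coord_sub u k : continuous (fun y : vec => (y - u) 0 k).
Proof.
have -> : (fun y : vec => (y - u) 0 k) = (fun y => y 0 k - u 0 k).
  by apply/funext => y; rewrite !mxE.
move=> y.
exact: (continuousB (@coord_continuous R 1 J 0 k y) (@cst_continuous _ _ (u 0 k) y)).
Qed.

Lemma continuous_dotp_sub c u : continuous (fun y : vec => dotp c (y - u)).
Proof.
apply: continuous_sum_fun => k.
by apply: continuousM_fun; [exact: cst_continuous | exact: continuous_coord_sub].
Qed.

Lemma continuous_dotp_sub_sub u : continuous (fun y : vec => dotp (y - u) (y - u)).
Proof.
apply: continuous_sum_fun => k.
by apply: continuousM_fun; exact: continuous_coord_sub.
Qed.

Lemma partial_of_line (F : vec -> R) y k (f : R -> R) D :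
  (forall t, F (t *: ebase R k + y) = f t) -> is_derive 0 (1:R) f D ->
  derivable F y (ebase R k) /\ partial F k y = D.
Proof.
move=> Ff fD.
have E : (fun h : R => h^-1 *: ((F \o shift y) (h *: ebase R k) - F y)) =
         (fun h : R => h^-1 *: ((f \o shift 0) (h *: 1) - f 0)).
  by apply/funext => h /=; rewrite -!Ff scale0r add0r addr0 [h *: 1]mulr1.
split; first by rewrite /derivable E; exact: ex_derive.
by rewrite /partial /derive E; exact: derive_val.
Qed.

End Euclid.

Section Bump.
Variables (R : realType) (J : nat).
Local Notation vec := 'rV[R]_J.
Variables (x w : vec) (H H1 H2 K K1 K2 : R -> R).
Implicit Types (y : vec) (t : R) (k j : 'I_J).

Definition ridge y := dotp w (y - x).
Definition sqdist y := dotp (y - x) (y - x).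

Definition ridge_bump y := H (ridge y) * K (sqdist y).

Definition ridge_bump_d k y :=
  H1 (ridge y) * w 0 k * K (sqdist y) + H (ridge y) * (K1 (sqdist y) * (2 * (y - x) 0 k)).

Definition ridge_bump_dd k j y :=
  (H2 (ridge y) * w 0 j * w 0 k * K (sqdist y)
    + H1 (ridge y) * w 0 k * (K1 (sqdist y) * (2 * (y - x) 0 j)))
  + (H1 (ridge y) * w 0 j * (K1 (sqdist y) * (2 * (y - x) 0 k))
    + H (ridge y) * (K2 (sqdist y) * (2 * (y - x) 0 j) * (2 * (y - x) 0 k)
      + K1 (sqdist y) * (2 * (j == k)%:R))).

Lemma coord_line k j t y : (t *: ebase R j + y - x) 0 k = (y - x) 0 k + t * (j == k)%:R.
Proof. by rewrite !mxE eqxx /= (eq_sym k j); ring. Qed.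

Lemma ridge_line j t y : ridge (t *: ebase R j + y) = ridge y + t * w 0 j.
Proof.
rewrite /ridge (_ : _ + y - x = (y - x) + t *: ebase R j); last by rewrite -addrA addrC.
by rewrite dotpDr dotpZr (dotpC w) dotp_ebase.
Qed.

Lemma sqdist_line j t y : sqdist (t *: ebase R j + y) = sqdist y + t * (2 * (y - x) 0 j) + t * t.
Proof.
rewrite /sqdist (_ : _ + y - x = (y - x) + t *: ebase R j); last by rewrite -addrA addrC.
move: (y - x) => u.
rewrite !dotpDl !dotpDr !dotpZl !dotpZr (dotpC (ebase R j) u) !dotp_ebase !mxE !eqxx /=.
ring.
Qed.

Hypotheses (dH : forall t, is_derive t (1:R) H (H1 t))
  (dH1 : forall t, is_derive t (1:R) H1 (H2 t))
  (dK : forall t, is_derive t (1:R) K (K1 t))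
  (dK1 : forall t, is_derive t (1:R) K1 (K2 t)).

Lemma partial_ridge_bump k y :
  derivable ridge_bump y (ebase R k) /\ partial ridge_bump k y = ridge_bump_d k y.
Proof.
apply: (partial_of_line (f := fun t => H (ridge y + t * w 0 k)
  * K (sqdist y + t * (2 * (y - x) 0 k) + t * t))).
  by move=> t; rewrite /ridge_bump ridge_line sqdist_line.
apply: (is_derive1_eq (is_derive1M (is_derive1_comp_fun (is_derive1_line _ _ 0) (dH _))
  (is_derive1_comp_fun (is_derive1_parabola _ _) (dK _)))).
by rewrite /ridge_bump_d !mul0r !addr0; ring.
Qed.

Lemma partial_ridge_bump_d k j y :
  derivable (ridge_bump_d k) y (ebase R j) /\
  partial (ridge_bump_d k) j y = ridge_bump_dd k j y.
Proof.
apply: (partial_of_line (f := fun t =>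
  H1 (ridge y + t * w 0 j) * w 0 k * K (sqdist y + t * (2 * (y - x) 0 j) + t * t)
  + H (ridge y + t * w 0 j) * (K1 (sqdist y + t * (2 * (y - x) 0 j) + t * t)
      * (2 * ((y - x) 0 k + t * (j == k)%:R))))).
  by move=> t; rewrite /ridge_bump_d ridge_line sqdist_line coord_line.
apply: (is_derive1_eq (is_derive1D
  (is_derive1M (is_derive1M (is_derive1_comp_fun (is_derive1_line _ _ 0) (dH1 _))
    (is_derive1_cst _ 0)) (is_derive1_comp_fun (is_derive1_parabola _ _) (dK _)))
  (is_derive1M (is_derive1_comp_fun (is_derive1_line _ _ 0) (dH _))
    (is_derive1M (is_derive1_comp_fun (is_derive1_parabola _ _) (dK1 _))
      (is_derive1M (is_derive1_cst 2 0) (is_derive1_line _ _ 0)))))).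
by rewrite /ridge_bump_dd !mul0r !addr0; ring.
Qed.

Lemma partial_ridge_bumpE k : partial ridge_bump k = ridge_bump_d k.
Proof. by apply/funext => y; case: (partial_ridge_bump k y). Qed.

Lemma grad_ridge_bump y : grad ridge_bump y = \row_k ridge_bump_d k y.
Proof. by apply/rowP => k; rewrite !mxE partial_ridge_bumpE. Qed.

Lemma partial2_ridge_bump k j y : partial (partial ridge_bump k) j y = ridge_bump_dd k j y.
Proof. by rewrite partial_ridge_bumpE; case: (partial_ridge_bump_d k j y). Qed.

Lemma grad_ridge_bump_core y : K (sqdist y) = 1 -> K1 (sqdist y) = 0 ->
  grad ridge_bump y = H1 (ridge y) *: w.
Proof.
by move=> K_1 K1_0; apply/rowP => k; rewrite grad_ridge_bump !mxE /ridge_bump_d K_1 K1_0; ring.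
Qed.

Lemma grad_ridge_bump_flat y : (H (ridge y) = 0 /\ H1 (ridge y) = 0) \/
  (K (sqdist y) = 0 /\ K1 (sqdist y) = 0) -> grad ridge_bump y = 0.
Proof.
move=> flat; apply/rowP => k; rewrite grad_ridge_bump !mxE /ridge_bump_d.
by case: flat => -[-> ->]; ring.
Qed.

Lemma partial2_ridge_bump_core k j y :
  K (sqdist y) = 1 -> K1 (sqdist y) = 0 -> K2 (sqdist y) = 0 ->
  partial (partial ridge_bump k) j y = H2 (ridge y) * w 0 j * w 0 k.
Proof.
by move=> K_1 K1_0 K2_0; rewrite partial2_ridge_bump /ridge_bump_dd K_1 K1_0 K2_0; ring.
Qed.

Lemma partial2_ridge_bump_flat k j y :
  (H (ridge y) = 0 /\ H1 (ridge y) = 0 /\ H2 (ridge y) = 0) \/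
  (K (sqdist y) = 0 /\ K1 (sqdist y) = 0 /\ K2 (sqdist y) = 0) ->
  partial (partial ridge_bump k) j y = 0.
Proof. by rewrite partial2_ridge_bump /ridge_bump_dd => -[[-> [-> ->]]|[-> [-> ->]]]; ring. Qed.

Lemma continuous_ridge : continuous ridge.
Proof. exact: continuous_dotp_sub. Qed.

Lemma continuous_sqdist : continuous sqdist.
Proof. exact: continuous_dotp_sub_sub. Qed.

Hypotheses (cH2 : continuous H2) (cK2 : continuous K2).

Let cH := continuous_of_is_derive1 dH.
Let cH1 := continuous_of_is_derive1 dH1.
Let cK := continuous_of_is_derive1 dK.
Let cK1 := continuous_of_is_derive1 dK1.

Ltac solve_continuous :=
  repeat first [ apply: continuousD_fun | apply: continuousM_fun
    | exact: cst_continuous | exact: continuous_coord_sub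
    | exact: (continuous_comp_fun continuous_ridge cH)
    | exact: (continuous_comp_fun continuous_ridge cH1)
    | exact: (continuous_comp_fun continuous_ridge cH2)
    | exact: (continuous_comp_fun continuous_sqdist cK)
    | exact: (continuous_comp_fun continuous_sqdist cK1)
    | exact: (continuous_comp_fun continuous_sqdist cK2) ].

Lemma continuous_ridge_bump_d k : continuous (ridge_bump_d k).
Proof. by rewrite /ridge_bump_d; solve_continuous. Qed.

Lemma continuous_ridge_bump_dd k j : continuous (ridge_bump_dd k j).
Proof. by rewrite /ridge_bump_dd; solve_continuous. Qed.

Lemma C2_ridge_bump : C2 ridge_bump.
Proof.
split=> k; rewrite /C1.
  split; first by move=> y; case: (partial_ridge_bump k y).
  by rewrite partial_ridge_bumpE; exact: continuous_ridge_bump_d.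
rewrite partial_ridge_bumpE => j.
split; first by move=> y; case: (partial_ridge_bump_d k j y).
have -> : partial (ridge_bump_d k) j = ridge_bump_dd k j.
  by apply/funext => y; case: (partial_ridge_bump_d k j y).
exact: continuous_ridge_bump_dd.
Qed.

End Bump.

Section HalfspaceGeometry.
Variables (R : realType) (J : nat).
Local Notation vec := 'rV[R]_J.
Variables (x v : vec).
Hypothesis v_unit : enorm v = 1.

(* [x + r v + Theta v] lies in the half-space [<v, z - x> >= r]. *)
Lemma distS_halfspace_ge (y : vec) (r : R) :
  r - dotp v (y - x) <= distS y [set x + r *: v + z | z in Theta v].
Proof.
have vv : dotp v v = 1 by rewrite -enorm_sqr v_unit expr1n.
apply: lb_le_inf.
  exists (enorm (y - (x + r *: v + 0))); exists (x + r *: v + 0) => //.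
  by exists 0; [rewrite /Theta /= dotp0l | ].
move=> _ [_ [z Tz <-] <-]; rewrite /Theta /= in Tz.
apply: le_trans (normr_dotp_unit_le (y - (x + r *: v + z)) v_unit).
have -> : y - (x + r *: v + z) = (y - x) - (r *: v + z).
  by rewrite opprD opprD !addrA opprD addrA.
rewrite (dotpBr (y - x)) (dotpDr (r *: v) z) dotpZr vv mulr1 (dotpC v z) -normrN.
by apply: le_trans (ler_norm _); lra.
Qed.

Variables (G : set vec) (rx c2 : R).
Hypothesis c2_gt0 : 0 < c2.
Hypothesis dist_sub_ball : forall r, 0 < r -> r < rx / c2 ->
  [set y | G y /\ cball x rx y /\ 0 < distS y [set x + r *: v + z | z in Theta v]]
  `<=` G `&` cball x (c2 * r).

(* If [<v, y - x> <= r], then [y] is at positive distance from [x + r' v + Theta v]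
   for [r'] slightly above [r], hence lies in [B_(c2 r')(x)] by [dist_sub_ball]. *)
Lemma far_points_lie_ahead (r : R) (y : vec) : 0 < r -> r < rx / c2 ->
  G y -> enorm (y - x) <= rx -> c2 * r < enorm (y - x) -> r < dotp v (y - x).
Proof.
move=> r_gt0 r_lt Gy y_near y_far.
pose m := Order.min (rx / c2) (enorm (y - x) / c2).
have m_gt : r < m by rewrite lt_min r_lt ltr_pdivlMr // mulrC.
have [m1 m2] : m <= rx / c2 /\ m <= enorm (y - x) / c2.
  by have := lexx m; rewrite {2}/m le_min => /andP.
pose r' := (r + m) / 2.
have r'_far : c2 * r' < enorm (y - x) by rewrite mulrC -ltr_pdivlMr // /r'; lra.
rewrite ltNge; apply/negP => not_ahead.
have /dist_sub_ball : [set y | G y /\ cball x rx y /\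
    0 < distS y [set x + r' *: v + z | z in Theta v]] y.
  split=> //; split=> //; apply: lt_le_trans (distS_halfspace_ge y r').
  by rewrite /r'; lra.
by move=> /(_ ltac:(rewrite /r'; lra) ltac:(rewrite /r'; lra)) [_]; rewrite /cball /=; lra.
Qed.

End HalfspaceGeometry.

Lemma sum2_le (R : realType) n (F : 'I_n -> 'I_n -> R) (b : R) :
  (forall i j, F i j <= b) -> \sum_(i < n) \sum_(j < n) F i j <= n%:R ^+ 2 * b.
Proof.
move=> Fb; apply: (@le_trans _ _ (\sum_(i < n) \sum_(j < n) b)).
  by apply: ler_sum => i _; apply: ler_sum => j _; exact: Fb.
by rewrite !sumr_const !card_ord -mulrnA expr2 -natrM mulr_natl.
Qed.

Definition cutoff_bump_bound (R : realType) (J : nat) (c1 : R) : R :=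
  1 + cutoff_slope c1 1 + J%:R ^+ 2 * cutoff_slope c1 1 ^+ 2.

Section CutoffBump.
Variables (R : realType) (J : nat) (I : finType).
Local Notation vec := 'rV[R]_J.
Variables (phi : I -> vec -> R) (gamma : I -> vec -> vec).
Local Notation G := (closure (Gset phi)).
Variables (x v : vec) (c1 c2 rx r : R).
Hypotheses (v_unit : enorm v = 1) (c1_lt1 : c1 < 1) (c2_gt1 : 1 < c2)
  (r_gt0 : 0 < r) (c2r_lt_rx : c2 * r < rx).
Hypothesis ahead : forall y, G y -> enorm (y - x) <= rx -> c2 * r < enorm (y - x) ->
  r < dotp v (y - x).
Hypothesis reflection_in_Theta : forall y, G y -> enorm (y - x) <= rx ->
  forall i, Iset phi y i -> Theta v (gamma i y).

Local Notation H := (cutoff c1 1).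
Local Notation K := (cutoff ((c2 * r) ^+ 2) (rx ^+ 2)).
Local Notation w := (r^-1 *: v).
Local Notation a := (cutoff_slope c1 1).

Definition cutoff_bump : vec -> R := ridge_bump x w H K.

Let c2r_gt0 : 0 < c2 * r.
Proof. by rewrite mulr_gt0 // (lt_trans ltr01). Qed.

Let lo_lt_hi : (c2 * r) ^+ 2 < rx ^+ 2.
Proof. by rewrite ltr_pXn2r ?nnegrE // ltW // (lt_trans c2r_gt0). Qed.

Let a_gt0 : 0 < a.
Proof. exact: cutoff_slope_gt0. Qed.

Lemma ridge_cutoff_bump y : ridge x w y = r^-1 * dotp v (y - x).
Proof. by rewrite /ridge dotpZl. Qed.

Lemma sqdist_enorm y : sqdist x y = enorm (y - x) ^+ 2.
Proof. by rewrite /sqdist enorm_sqr. Qed.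

Lemma cutoff_bump_core y : enorm (y - x) <= c2 * r ->
  [/\ K (sqdist x y) = 1, cutoff1 ((c2 * r) ^+ 2) (rx ^+ 2) (sqdist x y) = 0
    & cutoff2 ((c2 * r) ^+ 2) (rx ^+ 2) (sqdist x y) = 0].
Proof.
move=> y_near; apply: cutoff_le_lo => //; rewrite sqdist_enorm.
by have := enorm_ge0 (y - x); nra.
Qed.

Lemma cutoff_bump_far y : G y -> c2 * r < enorm (y - x) ->
  (H (ridge x w y) = 0 /\ cutoff1 c1 1 (ridge x w y) = 0 /\
   cutoff2 c1 1 (ridge x w y) = 0) \/
  (K (sqdist x y) = 0 /\ cutoff1 ((c2 * r) ^+ 2) (rx ^+ 2) (sqdist x y) = 0 /\
   cutoff2 ((c2 * r) ^+ 2) (rx ^+ 2) (sqdist x y) = 0).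
Proof.
move=> Gy y_far; have [y_near|y_out] := leP (enorm (y - x)) rx.
  have ridge_ge1 : 1 <= ridge x w y.
    by rewrite ridge_cutoff_bump ler_pdivlMl // mulr1 ltW // ahead.
  by left; have [-> -> ->] := cutoff_ge_hi c1_lt1 ridge_ge1.
have sqdist_ge : rx ^+ 2 <= sqdist x y.
  by rewrite sqdist_enorm; have := ltW (lt_trans c2r_gt0 c2r_lt_rx); nra.
by right; have [-> -> ->] := cutoff_ge_hi lo_lt_hi sqdist_ge.
Qed.

Lemma C2_cutoff_bump : C2 cutoff_bump.
Proof.
rewrite /cutoff_bump; apply: C2_ridge_bump;
  by [exact: is_derive_cutoff | exact: is_derive_cutoff1 | exact: continuous_cutoff2].
Qed.

Lemma cutoff_bump_bound01 y : 0 <= cutoff_bump y <= 1.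
Proof.
have /andP[H0 H1] := cutoff_bound c1 1 (ridge x w y).
have /andP[K0 K1] := cutoff_bound ((c2 * r) ^+ 2) (rx ^+ 2) (sqdist x y).
by rewrite /cutoff_bump /ridge_bump mulr_ge0 //= mulr_ile1.
Qed.

Lemma cutoff_bump_eq1 y : enorm (y - x) <= c1 * r -> cutoff_bump y = 1.
Proof.
move=> y_near.
have y_core : enorm (y - x) <= c2 * r.
  by apply: le_trans y_near _; rewrite ler_pM2r // ltW // (lt_trans c1_lt1).
have [K_1 _ _] := cutoff_bump_core y_core.
have ridge_le : ridge x w y <= c1.
  rewrite ridge_cutoff_bump ler_pdivrMl // mulrC; apply: le_trans y_near.
  exact: le_trans (ler_norm _) (normr_dotp_unit_le _ v_unit).
have [H_1 _ _] := cutoff_le_lo c1_lt1 ridge_le.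
by rewrite /cutoff_bump /ridge_bump H_1 K_1 mulr1.
Qed.

Lemma supp_cutoff_bump_sqdist : supp cutoff_bump `<=` [set y | sqdist x y <= rx ^+ 2].
Proof.
have closed_ball : closed [set y | sqdist x y <= rx ^+ 2].
  apply: (@preimage_closed _ _ (sqdist x) [set s | s <= rx ^+ 2]); last exact: closed_le.
  by move=> z _; exact: continuous_sqdist.
have nonzero_sub : [set y | cutoff_bump y != 0] `<=` [set y | sqdist x y <= rx ^+ 2].
  move=> y /= g_neq0; rewrite leNgt; apply/negP => /ltW y_out.
  have [K_0 _ _] := cutoff_ge_hi lo_lt_hi y_out.
  by move: g_neq0; rewrite /cutoff_bump /ridge_bump K_0 mulr0 eqxx.
by move=> y /(closureS nonzero_sub); rewrite -(proj1 (closure_id _) closed_ball).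
Qed.

Lemma compact_supp_cutoff_bump : compact (supp cutoff_bump).
Proof.
have rx_ge0 : 0 <= rx by rewrite ltW // (lt_trans c2r_gt0).
apply: (@subclosed_compact _ _
  [set z : vec | forall i, `[x 0 i - rx, x 0 i + rx]%classic (z 0 i)]).
- exact: closed_closure.
- apply: (@rV_compact _ _ (fun i => `[x 0 i - rx, x 0 i + rx]%classic)) => i.
  exact: segment_compact.
move=> z /supp_cutoff_bump_sqdist /=; rewrite sqdist_enorm => z_in i.
have z_near : enorm (z - x) <= rx by have := enorm_ge0 (z - x); nra.
have := le_trans (normr_coord_le (z - x) i) z_near; rewrite !mxE ler_norml.
by rewrite /= in_itv /= => /andP[? ?]; apply/andP; split; lra.
Qed.

Lemma supp_cutoff_bump_G : supp cutoff_bump `&` G `<=` cball x (c2 * r).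
Proof.
move=> y [y_supp Gy]; rewrite /cball /= leNgt; apply/negP => y_far.
have [y_near|y_out] := leP (enorm (y - x)) rx; last first.
  have := supp_cutoff_bump_sqdist y_supp; rewrite /= sqdist_enorm.
  by have := ltW (lt_trans c2r_gt0 c2r_lt_rx); nra.
have ridge_gt1 : 1 < ridge x w y.
  by rewrite ridge_cutoff_bump ltr_pdivlMl // mulr1 ahead.
have near_gt1 : \forall z \near y, 1 < ridge x w z.
  exact: (cvgr_gt _ (@continuous_ridge _ _ x w y) _ ridge_gt1).
have [z [/= g_neq0 /ltW z_gt1]] := y_supp _ near_gt1.
have [H_0 _ _] := cutoff_ge_hi c1_lt1 z_gt1.
by move: g_neq0; rewrite /cutoff_bump /ridge_bump H_0 mul0r eqxx.
Qed.

Let dH := is_derive_cutoff c1 1.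
Let dH1 := is_derive_cutoff1 c1 1.
Let dK := is_derive_cutoff ((c2 * r) ^+ 2) (rx ^+ 2).
Let dK1 := is_derive_cutoff1 ((c2 * r) ^+ 2) (rx ^+ 2).

Lemma grad_cutoff_bump_far y : G y -> c2 * r < enorm (y - x) -> grad cutoff_bump y = 0.
Proof.
move=> Gy y_far; apply: (grad_ridge_bump_flat dH dK).
by case: (cutoff_bump_far Gy y_far) => -[-> [-> _]]; [left | right].
Qed.

Lemma partial2_cutoff_bump_far i j y : G y -> c2 * r < enorm (y - x) ->
  partial (partial cutoff_bump j) i y = 0.
Proof.
move=> Gy y_far; apply: (partial2_ridge_bump_flat dH dH1 dK dK1).
by case: (cutoff_bump_far Gy y_far) => -[-> [-> ->]]; [left | right].
Qed.

Lemma enorm_grad_cutoff_bump_le y : G y -> enorm (grad cutoff_bump y) <= a / r.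
Proof.
move=> Gy; have [y_core|y_far] := leP (enorm (y - x)) (c2 * r); last first.
  by rewrite grad_cutoff_bump_far // enorm0 divr_ge0 // ltW.
have [K_1 K1_0 _] := cutoff_bump_core y_core.
rewrite /cutoff_bump (grad_ridge_bump_core w dH dK K_1 K1_0) !enormZ v_unit mulr1.
rewrite normfV (gtr0_norm r_gt0) ler_pM2r ?invr_gt0 // ler_norml.
have /andP[lb ub] := cutoff1_bound c1_lt1 (ridge x w y).
by rewrite lb (le_trans ub) // ltW.
Qed.

Lemma hessian_cutoff_bump_le y : G y ->
  \sum_(i < J) \sum_(j < J) `|partial (partial cutoff_bump j) i y|
    <= J%:R ^+ 2 * (a ^+ 2 / r ^+ 2).
Proof.
move=> Gy; apply: sum2_le => i j.
have [y_core|y_far] := leP (enorm (y - x)) (c2 * r); last first.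
  rewrite partial2_cutoff_bump_far // normr0.
  exact: divr_ge0 (sqr_ge0 _) (sqr_ge0 _).
have [K_1 K1_0 K2_0] := cutoff_bump_core y_core.
rewrite /cutoff_bump (partial2_ridge_bump_core w dH dH1 dK dK1 _ _ K_1 K1_0 K2_0).
have w_le k : `|w 0 k| <= r^-1.
  rewrite mxE normrM normfV (gtr0_norm r_gt0) -[X in _ <= X]mulr1 ler_pM2l ?invr_gt0 //.
  by have := normr_coord_le v k; rewrite v_unit.
rewrite [r ^+ 2]expr2 invfM mulrA 2!normrM.
apply: ler_pM; [by rewrite mulr_ge0 | by [] | | exact: w_le].
by apply: ler_pM => //; solve [exact: cutoff2_bound | exact: w_le].
Qed.

Lemma cutoff_bump_reflection y : bdry (Gset phi) y ->
  forall d, dcone phi gamma y d -> dotp d (grad cutoff_bump y) <= 0.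
Proof.
move=> [Gy _] d [s [s_ge0 ->]].
have [y_core|y_far] := leP (enorm (y - x)) (c2 * r); last first.
  by rewrite grad_cutoff_bump_far // dotp0r.
have [K_1 K1_0 _] := cutoff_bump_core y_core.
rewrite /cutoff_bump (grad_ridge_bump_core w dH dK K_1 K1_0) !dotpZr dotp_suml.
have /andP[_ H1_le0] := cutoff1_bound c1_lt1 (ridge x w y).
have sum_ge0 : 0 <= \sum_(i | `[< Iset phi y i >]) dotp (s i *: gamma i y) v.
  apply: sumr_ge0 => i /asboolP Iy_i; rewrite dotpZl mulr_ge0 //.
  by apply: reflection_in_Theta => //; exact: le_trans y_core (ltW c2r_lt_rx).
by rewrite mulr_le0_ge0 // mulr_ge0 // invr_ge0 ltW.
Qed.

Let A := cutoff_bump_bound J c1.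

Let A_gt : [/\ 1 <= A, a <= A & J%:R ^+ 2 * a ^+ 2 < A].
Proof.
have := sqr_ge0 (J%:R * a); rewrite exprMn /A /cutoff_bump_bound => Ja_ge0.
have a0 := a_gt0.
by split; lra.
Qed.

Lemma cutoff_bump_spec :
  [/\ C2 cutoff_bump /\ compact (supp cutoff_bump) /\ (forall y, G y -> 0 <= cutoff_bump y),
      supp cutoff_bump `&` G `<=` cball x (c2 * r) `&` G
        /\ cball x (c2 * r) `&` G `<=` cball x rx `&` G,
      (forall y, cball x (c1 * r) y -> G y -> cutoff_bump y = 1),
      [/\ forall y, G y -> `|cutoff_bump y| <= A,
          forall y, G y -> enorm (grad cutoff_bump y) <= A / r &
          exists2 B : R, B < A / r ^+ 2 &
            forall y, G y ->
              \sum_(i < J) \sum_(j < J) `|partial (partial cutoff_bump j) i y| <= B] &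
      forall y, bdry (Gset phi) y ->
        forall d, dcone phi gamma y d -> dotp d (grad cutoff_bump y) <= 0].
Proof.
have [A_ge1 a_le_A JA_lt_A] := A_gt.
split.
- split; first exact: C2_cutoff_bump.
  split; first exact: compact_supp_cutoff_bump.
  by move=> y _; case/andP: (cutoff_bump_bound01 y).
- split=> y [y_in Gy]; split=> //; first exact: supp_cutoff_bump_G.
  by apply: le_trans y_in _; rewrite ltW.
- by move=> y y_near _; exact: cutoff_bump_eq1.
- split.
  + move=> y _; have /andP[g_ge0 g_le1] := cutoff_bump_bound01 y.
    by rewrite ger0_norm // (le_trans g_le1).
  + move=> y Gy; apply: le_trans (enorm_grad_cutoff_bump_le Gy) _.
    by rewrite ler_pM2r ?invr_gt0.
  + exists (J%:R ^+ 2 * (a ^+ 2 / r ^+ 2)); last exact: hessian_cutoff_bump_le.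
    by rewrite mulrA ltr_pM2r ?invr_gt0 ?exprn_gt0.
- exact: cutoff_bump_reflection.
Qed.

End CutoffBump.

Theorem propositionA4 (R : realType) (J N : nat) (I : finType)
  (sigma : 'rV[R]_J -> 'M[R]_(J, N))
  (phi : I -> 'rV[R]_J -> R) (gamma : I -> 'rV[R]_J -> 'rV[R]_J)
  (V : set 'rV[R]_J) (v : 'rV[R]_J -> 'rV[R]_J) (rr alpha c1 c2 : 'rV[R]_J -> R) :
  continuous sigma ->
  pw_C1_cont_refl phi gamma ->
  assumption2' sigma phi gamma V v rr alpha c1 c2 ->
  forall x, V x ->
  exists A : R, forall r : R, 0 < r -> r < rr x / c2 x ->
  exists g : 'rV[R]_J -> R,
    [/\ C2 g /\ compact (supp g) /\
        (forall y, closure (Gset phi) y -> 0 <= g y),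
        supp g `&` closure (Gset phi) `<=` cball x (c2 x * r) `&` closure (Gset phi)
          /\ cball x (c2 x * r) `&` closure (Gset phi)
             `<=` cball x (rr x) `&` closure (Gset phi),
        (forall y, cball x (c1 x * r) y -> closure (Gset phi) y -> g y = 1),
        [/\ forall y, closure (Gset phi) y -> `|g y| <= A,
            forall y, closure (Gset phi) y -> enorm (grad g y) <= A / r &
            exists2 B : R, B < A / r ^+ 2 &
              forall y, closure (Gset phi) y ->
                \sum_(i < J) \sum_(j < J) `|partial (partial g j) i y| <= B] &
        forall y, bdry (Gset phi) y ->
          forall d, dcone phi gamma y d -> dotp d (grad g y) <= 0].
Proof.
move=> _ _ [_ _ _ assumption_at] x Vx.
have [[v_unit [_ [_ [_ [c1_lt1 c2_gt1]]]]] near_x cone_sandwich _] := assumption_at x Vx.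
have c2_gt0 : 0 < c2 x := lt_trans ltr01 c2_gt1.
exists (cutoff_bump_bound J (c1 x)) => r r_gt0 r_lt.
exists (cutoff_bump x (v x) (c1 x) (c2 x) (rr x) r).
apply: cutoff_bump_spec => //.
- by rewrite mulrC -ltr_pdivlMr.
- move=> y Gy y_near y_far.
  apply: (far_points_lie_ahead v_unit c2_gt0 _ r_gt0 r_lt Gy y_near y_far).
  by move=> r' r'_gt0 r'_lt; case: (cone_sandwich r' r'_gt0 r'_lt).
- by move=> y Gy y_near; case: (near_x y Gy y_near).
Qed.
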